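(* Let $F\in\mathbb{Q}[x,y]$ be such that $F(\mathbb{R}\times\mathbb{R})=\mathbb{R}$ and $F(\mathbb{Z}\times\mathbb{Z})\supseteq\mathbb{N}$, and suppose the curve $C=\{F(x,y)=0\}\subset\mathbb{A}^2$ is smooth and isomorphic over $\overline{\mathbb{Q}}$ to $\mathbb{A}^1_*$. Let $\phi:\mathbb{P}^1\setminus\{a,b\}\to C$ be an isomorphism. Then the two points $a,b$ (the two places at infinity of $C$) are defined over $\mathbb{R}$.
   Context: $\mathbb{N}$ denotes the set of non-negative integers; $\mathbb{A}^1_*=\mathbb{A}^1\setminus\{0\}$. *)

(* R : realType (mathcomp-reals), complex numbers R[i]
   from mathcomp-real-closed.  Bivariate polynomials are {poly {poly K}}:
   the outer variable is y, the inner one is x. *)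
From HB Require Import structures.
From mathcomp Require Import all_boot all_order all_algebra.
From mathcomp Require Import reals complex.
Set Implicit Arguments. Unset Strict Implicit. Unset Printing Implicit Defensive.
Import Order.TTheory GRing.Theory Num.Theory.
Local Open Scope ring_scope.

Definition ev2 {K : comNzRingType} (F : {poly {poly K}}) (x y : K) : K :=
  (map_poly (fun p : {poly K} => p.[x]) F).[y].

Definition dX {K : comNzRingType} (F : {poly {poly K}}) : {poly {poly K}} :=
  map_poly (@deriv K) F.
Definition dY {K : comNzRingType} (F : {poly {poly K}}) : {poly {poly K}} :=
  deriv F.

Definition map2 {K L : comNzRingType} (f : K -> L) (F : {poly {poly K}})
  : {poly {poly L}} := map_poly (map_poly f) F.

Definition hom {K : comNzRingType} (d : nat) (p : {poly K}) (s t : K) : K :=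
  \sum_(i < d.+1) p`_i * s ^+ i * t ^+ (d - i).

Section Geometry.
Variable R : realType.
Local Notation C := (R[i]).

Definition FC (F : {poly {poly rat}}) : {poly {poly C}} := map2 ratr F.
Definition FR (F : {poly {poly rat}}) : {poly {poly R}} := map2 ratr F.

Definition onCurve (F : {poly {poly rat}}) (c : C * C) : Prop :=
  ev2 (FC F) c.1 c.2 = 0.

Definition smooth_curve (F : {poly {poly rat}}) : Prop :=
  forall c : C * C, onCurve F c ->
    ev2 (dX (FC F)) c.1 c.2 != 0 \/ ev2 (dY (FC F)) c.1 c.2 != 0.

Definition is_algebraic (z : C) : Prop :=
  exists p : {poly rat}, p != 0 /\ root (map_poly ratr p) z.

(* {F = 0} is isomorphic over Qbar to A^1_* : a morphism
   t |-> (P1(t)/t^m, P2(t)/t^m) with Qbar-coefficients from A^1_* to the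
   curve, with an inverse morphism given by a regular function G on the
   curve which does not vanish on it. *)
Definition iso_Gm_over_Qbar (F : {poly {poly rat}}) : Prop :=
  exists (P1 P2 : {poly C}) (m : nat) (G : {poly {poly C}}),
    (forall i, is_algebraic P1`_i /\ is_algebraic P2`_i) /\
    let phi t := (P1.[t] / t ^+ m, P2.[t] / t ^+ m) in
    (forall t : C, t != 0 -> onCurve F (phi t)) /\
    (forall t : C, t != 0 -> ev2 G (phi t).1 (phi t).2 = t) /\
    (forall c, onCurve F c ->
       ev2 G c.1 c.2 != 0 /\ phi (ev2 G c.1 c.2) = c).

(* points of P^1(C) are given by nonzero pairs (s,t) = [s:t] *)
Definition nonzero2 (v : C * C) : Prop := v.1 != 0 \/ v.2 != 0.
Definition projeq (u v : C * C) : Prop := u.1 * v.2 = u.2 * v.1.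

Definition real_point (a : C * C) : Prop :=
  exists l : C, l != 0 /\
    exists u v : R, l * a.1 = u%:C%C /\ l * a.2 = v%:C%C.

Definition P1minus2 (a b v : C * C) : Prop :=
  nonzero2 v /\ ~ projeq v a /\ ~ projeq v b.

(* phi : P^1 \ {a,b} -> {F = 0} is an isomorphism defined over R:
   phi [s:t] = (A1(s,t)/Q(s,t), A2(s,t)/Q(s,t)) with A1, A2, Q real binary
   forms of the same degree d, Q not vanishing on P^1 \ {a,b}; the inverse
   morphism from the curve to P^1 \ {a,b} is given locally by a finite
   family of pairs of polynomials [G_i : H_i] that cover the curve and agree
   on overlaps. *)
Definition iso_P1minus2_over_R (F : {poly {poly rat}}) (a b : C * C) : Prop :=
  exists (d : nat) (A1 A2 Q : {poly R}),
    let h p (v : C * C) := hom d (map_poly (real_complex R) p) v.1 v.2 in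
    let phi v := (h A1 v / h Q v, h A2 v / h Q v) in
    (forall v, P1minus2 a b v -> h Q v != 0 /\ onCurve F (phi v)) /\
    exists Gs : seq ({poly {poly C}} * {poly {poly C}}),
      let psi (g : {poly {poly C}} * {poly {poly C}}) (c : C * C) :=
        (ev2 g.1 c.1 c.2, ev2 g.2 c.1 c.2) in
      (forall c, onCurve F c -> exists2 g, g \in Gs & nonzero2 (psi g c)) /\
      (forall c, onCurve F c -> forall g g', g \in Gs -> g' \in Gs ->
          projeq (psi g c) (psi g' c)) /\
      (forall c, onCurve F c -> forall g, g \in Gs -> nonzero2 (psi g c) ->
          P1minus2 a b (psi g c)) /\
      (forall v, P1minus2 a b v -> forall g, g \in Gs ->
          nonzero2 (psi g (phi v)) -> projeq (psi g (phi v)) v) /\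
      (forall c, onCurve F c -> forall g, g \in Gs -> nonzero2 (psi g c) ->
          phi (psi g c) = c).

End Geometry.

(* Suppose the puncture a were not real.  If the denominator Q of phi did not vanish at a,
   phi would extend along the line through a and b to a point phi(a) of the curve, and the
   inverse of phi would send phi(a) back to a, which is not in P^1 \ {a,b}.  So Q(a) = 0;
   Q being real, it also vanishes at the conjugate of a, which forces conj(a) = b.  Then
   P^1(R) lies in P^1 \ {a,b}, and since phi commutes with conjugation and is injective,
   every real point of the curve is the image of a point of the compact P^1(R): the real
   locus of the curve is bounded.  This contradicts F(R x R) = R: F takes values of both
   signs and of arbitrarily large modulus, hence outside any box, and the intermediate value
   theorem along a vertical and a horizontal segment then gives a zero of F outside it. *)

From Pilot Require Import Defs.
From HB Require Import structures.
From mathcomp Require Import all_boot all_order all_algebra.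
From mathcomp Require Import reals complex.
From mathcomp Require polyrcf boolp classical_sets topology normedtype derive.
From mathcomp Require Import ring lra.
From Stdlib Require Import Classical.
Import Order.TTheory GRing.Theory Num.Theory.
Local Open Scope ring_scope.
Set Implicit Arguments. Unset Strict Implicit. Unset Printing Implicit Defensive.

Section FormsAndEvaluation.
Variable K : comNzRingType.

Lemma rmorph_hom (L : comNzRingType) (f : {rmorphism K -> L}) d p s t :
  f (Defs.hom d p s t) = Defs.hom d (map_poly f p) (f s) (f t).
Proof.
rewrite /Defs.hom rmorph_sum; apply: eq_bigr => i _.
by rewrite !rmorphM !rmorphXn coef_map.
Qed.

Lemma homZ d (p : {poly K}) l s t : Defs.hom d p (l * s) (l * t) = l ^+ d * Defs.hom d p s t.
Proof.
rewrite /Defs.hom mulr_sumr; apply: eq_bigr => i _.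
have -> : l ^+ d = l ^+ i * l ^+ (d - i) by rewrite -exprD subnKC // -ltnS.
by rewrite !exprMn; ring.
Qed.

Lemma hom_chart d (p : {poly K}) u : Defs.hom d p u 1 = (\poly_(i < d.+1) p`_i).[u].
Proof. by rewrite horner_poly; apply: eq_bigr => i _; rewrite expr1n mulr1. Qed.

Lemma hom_swap d (p : {poly K}) s t :
  Defs.hom d p s t = Defs.hom d (\poly_(i < d.+1) p`_(d - i)) t s.
Proof.
rewrite /Defs.hom (reindex_inj rev_ord_inj) /=; apply: eq_bigr => i _.
by rewrite coef_poly subSS ltn_ord subKn 1?mulrAC // -ltnS.
Qed.

Lemma rmorph_ev2 (L : comNzRingType) (f : {rmorphism K -> L}) (G : {poly {poly K}}) x y :
  f (ev2 G x y) = ev2 (map2 f G) (f x) (f y).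
Proof.
rewrite /ev2 /map2 -horner_map /=; congr (_.[_]).
rewrite -map_poly_comp -map_poly_comp_id0 ?horner0 //.
by apply: eq_map_poly => p /=; rewrite horner_map.
Qed.

Lemma ev2_MXaddC (G : {poly {poly K}}) g x y :
  ev2 (G * 'X + g%:P) x y = ev2 G x y * y + g.[x].
Proof.
have -> : ev2 (G * 'X + g%:P) x y = (map_poly (horner_eval x) (G * 'X + g%:P)).[y] by [].
by rewrite rmorphD rmorphM /= map_polyX map_polyC hornerMXaddC.
Qed.

Lemma ev2_horizontal (G : {poly {poly K}}) x y : ev2 G x y = (G.[y%:P]).[x].
Proof.
have -> : ev2 G x y = (map_poly (horner_eval x) G).[horner_eval x y%:P].
  by rewrite /horner_eval hornerC.
by rewrite horner_map.
Qed.

End FormsAndEvaluation.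

Lemma horner_hom (K : comNzRingType) d (p : {poly K}) (s t : {poly K}) e :
  (Defs.hom d (map_poly polyC p) s t).[e] = Defs.hom d p s.[e] t.[e].
Proof.
have -> : (Defs.hom d (map_poly polyC p) s t).[e] =
    horner_eval e (Defs.hom d (map_poly polyC p) s t) by [].
rewrite (rmorph_hom (horner_eval e)) -map_poly_comp map_poly_id // => x _.
by rewrite /= /horner_eval hornerC.
Qed.

Lemma hom_ratioZ (K : fieldType) d (p q : {poly K}) l s t : l != 0 ->
  Defs.hom d p (l * s) (l * t) / Defs.hom d q (l * s) (l * t) =
  Defs.hom d p s t / Defs.hom d q s t.
Proof. by move=> l0; rewrite !homZ -mulf_div divff ?mul1r // expf_neq0. Qed.

Lemma poly_eq0_of_vanishing (K : numDomainType) (p : {poly K}) :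
  (forall e, p.[e] = 0) -> p = 0.
Proof.
move=> p_vanish; apply/eqP; apply: contraT => p_neq0.
have nat_roots : all (root p) [seq i%:R | i <- iota 0 (size p)].
  by apply/allP => _ /mapP [i _ ->]; apply/eqP/p_vanish.
have nat_uniq : uniq [seq (i%:R : K) | i <- iota 0 (size p)].
  by rewrite map_inj_uniq ?iota_uniq // => i j /eqP; rewrite eqr_nat => /eqP.
by have := max_poly_roots p_neq0 nat_roots nat_uniq; rewrite size_map size_iota ltnn.
Qed.

Section PowDenominator.
Variables (K : fieldType) (q : {poly K}).

Definition has_pow_denom (f : K -> K) : Prop :=
  exists (n : nat) (P : {poly K}), forall e, q.[e] != 0 -> P.[e] = q.[e] ^+ n * f e.

Lemma has_pow_denom_poly (p : {poly K}) : has_pow_denom (horner p).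
Proof. by exists 0%N, p => e _; rewrite mul1r. Qed.

Lemma has_pow_denom_frac (p : {poly K}) : has_pow_denom (fun e => p.[e] / q.[e]).
Proof. by exists 1%N, p => e qe; rewrite expr1 mulrC divfK. Qed.

Lemma has_pow_denomD f g :
  has_pow_denom f -> has_pow_denom g -> has_pow_denom (fun e => f e + g e).
Proof.
move=> [m [P Pf]] [n [Q Qg]]; exists (m + n)%N, (P * q ^+ n + Q * q ^+ m) => e qe.
by rewrite !hornerE Pf // Qg // exprD; ring.
Qed.

Lemma has_pow_denomM f g :
  has_pow_denom f -> has_pow_denom g -> has_pow_denom (fun e => f e * g e).
Proof.
move=> [m [P Pf]] [n [Q Qg]]; exists (m + n)%N, (P * Q) => e qe.
by rewrite hornerM Pf // Qg // exprD; ring.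
Qed.

Lemma has_pow_denomB f g :
  has_pow_denom f -> has_pow_denom g -> has_pow_denom (fun e => f e - g e).
Proof.
move=> hf hg; apply: has_pow_denomD hf _.
have [n [Q Qg]] := hg; exists n, (- Q) => e qe.
by rewrite hornerN Qg // mulrN.
Qed.

Lemma eq_has_pow_denom f g : f =1 g -> has_pow_denom f -> has_pow_denom g.
Proof. by move=> fg [n [P Pf]]; exists n, P => e qe; rewrite -fg Pf. Qed.

Lemma has_pow_denom_ev2 (G : {poly {poly K}}) f g :
  has_pow_denom f -> has_pow_denom g -> has_pow_denom (fun e => ev2 G (f e) (g e)).
Proof.
move=> hf hg; elim/poly_ind: G => [|G c hG].
  by apply: eq_has_pow_denom (has_pow_denom_poly 0) => e; rewrite /ev2 map_poly0 !horner0.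
have hc : has_pow_denom (fun e => c.[f e]).
  elim/poly_ind: c => [|c k hc].
    by apply: eq_has_pow_denom (has_pow_denom_poly 0) => e; rewrite !horner0.
  apply: eq_has_pow_denom (has_pow_denomD (has_pow_denomM hc hf) (has_pow_denom_poly k%:P)).
  by move=> e; rewrite hornerMXaddC hornerC.
apply: eq_has_pow_denom (has_pow_denomD (has_pow_denomM hG hg) hc) => e.
by rewrite ev2_MXaddC.
Qed.

End PowDenominator.

(* The algebraic substitute for continuity at [t]. *)
Lemma has_pow_denom_eq0 (K : numFieldType) (q : {poly K}) f t :
  has_pow_denom q f -> q.[t] != 0 ->
  (forall e, e != t -> q.[e] != 0 -> f e = 0) -> f t = 0.
Proof.
move=> [n [P Pf]] qt f0.
have P0 : P * q * ('X - t%:P) = 0.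
  apply: poly_eq0_of_vanishing => e; rewrite !hornerE.
  have [-> | et] := eqVneq e t; first by rewrite subrr mulr0.
  have [-> | qe] := eqVneq q.[e] 0; first by rewrite mulr0 mul0r.
  by rewrite Pf // f0 // !mulr0 !mul0r.
have q0 : q != 0 by apply: contraNneq qt => ->; rewrite horner0.
move: P0 => /eqP; rewrite !mulf_eq0 polyXsubC_eq0 (negbTE q0) !orbF => /eqP P0.
by have /eqP := Pf t qt; rewrite P0 horner0 eq_sym mulf_eq0 expf_eq0 (negbTE qt) andbF => /eqP.
Qed.

Section ProjectiveLine.
Variable R : realType.
Local Notation C := R[i].
Implicit Types u v w : C * C.

Definition vconj v : C * C := (v.1^*, v.2^*)%C.

Lemma vconjK : involutive vconj.
Proof. by case=> x y; rewrite /vconj /= !conjcK. Qed.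

Lemma vconj_real (s t : R) : vconj (s%:C, t%:C)%C = (s%:C, t%:C)%C.
Proof. by rewrite /vconj /= oppr0. Qed.

Lemma nonzero2_conj v : nonzero2 v -> nonzero2 (vconj v).
Proof. by rewrite /nonzero2 /vconj /= !conjc_eq0. Qed.

Lemma nonzero2_real (s t : R) : nonzero2 (s%:C, t%:C)%C <-> s != 0 \/ t != 0.
Proof. by rewrite /nonzero2 /= !eq_complex /= eqxx !andbT. Qed.

Lemma projeq_sym u v : projeq u v -> projeq v u.
Proof. by rewrite /projeq => uv; rewrite mulrC -uv mulrC. Qed.

Lemma projeq_trans v u w : nonzero2 v -> projeq u v -> projeq v w -> projeq u w.
Proof.
rewrite /projeq => nz uv vw; apply/eqP; rewrite -subr_eq0.
set X := _ - _.
have [k k_neq0 kX] : exists2 k, k != 0 & k * X = 0.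
  case: nz => [v1 | v2]; [exists v.1 | exists v.2] => //.
    have -> : v.1 * X = u.1 * (v.1 * w.2 - v.2 * w.1) + w.1 * (u.1 * v.2 - u.2 * v.1).
      by rewrite /X; ring.
    by rewrite uv vw !subrr; ring.
  have -> : v.2 * X = w.2 * (u.1 * v.2 - u.2 * v.1) + u.2 * (v.1 * w.2 - v.2 * w.1).
    by rewrite /X; ring.
  by rewrite uv vw !subrr; ring.
by move/eqP: kX; rewrite mulf_eq0 (negbTE k_neq0).
Qed.

Lemma projeq_conj u v : projeq u v -> projeq (vconj u) (vconj v).
Proof. by rewrite /projeq /vconj /= -!rmorphM => ->. Qed.

Lemma projeq0l u v : ~ nonzero2 u -> projeq u v.
Proof.
rewrite /nonzero2 /projeq => /not_or_and [/negP/negPn/eqP -> /negP/negPn/eqP ->].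
by rewrite !mul0r.
Qed.

Lemma real_point_of_projeq_conj w : nonzero2 w -> projeq w (vconj w) -> real_point w.
Proof.
case: w => [w1 w2]; rewrite /projeq /real_point /= => nz ww.
have real_of_conj (z : C) : z^*%C = z -> exists x : R, z = x%:C%C.
  by case: z => x y [] y_eq; exists x; congr (_ +i* _)%C; lra.
have [l [l_neq0 [real_l1 real_l2]]] :
    exists l, l != 0 /\ (l * w1)^*%C = l * w1 /\ (l * w2)^*%C = l * w2.
  case: nz => /= nz; [exists w1^*%C | exists w2^*%C];
    rewrite conjc_eq0 nz !rmorphM /= !conjcK; (split; [by [] | split]).
  - by rewrite mulrC.
  - by rewrite ww mulrC.
  - by rewrite -ww mulrC.
  - by rewrite mulrC.
have [[u hu] [v hv]] := (real_of_conj _ real_l1, real_of_conj _ real_l2).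
by exists l; split=> //; exists u, v.
Qed.

End ProjectiveLine.

Lemma onCurve_real (R : realType) F (x y : R) :
  onCurve F (x%:C, y%:C)%C <-> ev2 (FR R F) x y = 0.
Proof.
have FC_FR : map2 (real_complex R) (FR R F) = FC R F.
  rewrite /map2 /FC /FR /map2 -map_poly_comp; apply: eq_map_poly => p /=.
  by rewrite -map_poly_comp; apply: eq_map_poly => r /=; rewrite fmorph_rat.
by rewrite /onCurve /= -FC_FR -rmorph_ev2; split=> [[]|->].
Qed.

Section RealPlane.
Variable R : realType.

Lemma poly_sign_root (p : {poly R}) s s' : p.[s] * p.[s'] <= 0 -> exists t, p.[t] = 0.
Proof.
wlog le_ss' : s s' / s <= s' => [hw|].
  by have [/hw|/ltW/hw] := leP s s'; [|rewrite mulrC]; apply.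
by move=> /(polyrcf.poly_ivt le_ss') [t _ /eqP pt]; exists t.
Qed.

Lemma sign_change_path (A B D : R) : A * D <= 0 -> A * B <= 0 \/ B * D <= 0.
Proof. by move=> AD; case: (lerP (A * B) 0) => AB; [left | right; nra]. Qed.

Lemma horner_norm_le (p : {poly R}) n (c : nat -> R) (K x : R) :
  (size p <= n)%N -> (forall i, `|p`_i| <= c i) -> `|x| <= K ->
  `|p.[x]| <= \sum_(i < n) c i * K ^+ i.
Proof.
move=> sp pc xK; rewrite (horner_coef_wide _ sp).
apply: le_trans (ler_norm_sum _ _ _) _; apply: ler_sum => i _.
have K0 : 0 <= K := le_trans (normr_ge0 x) xK.
rewrite normrM normrX ler_pM ?exprn_ge0 //.
by apply: lerXn2r; rewrite ?nnegrE.
Qed.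

Lemma ev2_bounded_on_box (G : {poly {poly R}}) (K : R) :
  exists B, forall x y, `|x| <= K -> `|y| <= K -> `|ev2 G x y| <= B.
Proof.
exists (\sum_(j < size G) (\sum_(i < size G`_j) `|G`_j`_i| * K ^+ i) * K ^+ j).
move=> x y xK yK.
apply: (horner_norm_le (c := fun j => \sum_(i < size G`_j) `|G`_j`_i| * K ^+ i)) yK.
  apply/leq_sizeP => j hj; rewrite coef_map_id0 ?horner0 //.
  by rewrite nth_default ?horner0.
move=> j; rewrite coef_map_id0 ?horner0 //.
exact: (horner_norm_le (c := fun i => `|G`_j`_i|)).
Qed.

(* Join a far point where G has the sign opposite to G(L, L) to (L, L) by a vertical and a
   horizontal segment, both outside the box of radius M. *)
Lemma surjective_ev2_far_root (G : {poly {poly R}}) (M : R) :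
  (forall r, exists x y, ev2 G x y = r) ->
  exists x y, ev2 G x y = 0 /\ (M < `|x| \/ M < `|y|).
Proof.
move=> G_surj; set L := M + 1.
have far_L : M < `|L| by apply: lt_le_trans (ler_norm L); rewrite /L ltrDl.
have vertical x0 y y' : M < `|x0| -> ev2 G x0 y * ev2 G x0 y' <= 0 ->
    exists x y, ev2 G x y = 0 /\ (M < `|x| \/ M < `|y|).
  by move=> x0_far /poly_sign_root [t t_root]; exists x0, t; split; [|left].
have horizontal y0 x x' : M < `|y0| -> ev2 G x y0 * ev2 G x' y0 <= 0 ->
    exists x y, ev2 G x y = 0 /\ (M < `|x| \/ M < `|y|).
  move=> y0_far; rewrite !ev2_horizontal => /poly_sign_root [t t_root].
  by exists t, y0; rewrite ev2_horizontal; split; [|right].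
have [B hB] := ev2_bounded_on_box G M.
have [z1 [z2 [z_far z_sign]]] : exists z1 z2,
    (M < `|z1| \/ M < `|z2|) /\ ev2 G z1 z2 * ev2 G L L <= 0.
  pose r := if ev2 G L L <= 0 then `|B| + 1 else - (`|B| + 1).
  have r_norm : `|r| = `|B| + 1.
    by rewrite /r; case: ifP; rewrite ?normrN ger0_norm // addr_ge0.
  have [z1 [z2 Gz]] := G_surj r.
  exists z1, z2; split.
    have [/hB z_box|] := lerP `|z1| M; last by left.
    have [/z_box|] := lerP `|z2| M; last by right.
    by rewrite Gz r_norm; have := ler_norm B; lra.
  rewrite Gz /r; case: ifP => GL.
    by rewrite mulr_ge0_le0 // addr_ge0.
  by rewrite mulNr oppr_le0 mulr_ge0 ?addr_ge0 //; lra.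
case: z_far => [z1_far | z2_far].
- have [] := sign_change_path (ev2 G z1 L) z_sign.
    exact: vertical.
  exact: horizontal.
- have [] := sign_change_path (ev2 G L z2) z_sign.
    exact: horizontal.
  exact: vertical.
Qed.

End RealPlane.

Section Compactness.
Import boolp classical_sets topology normedtype derive numFieldNormedType.Exports.
Variable R : realType.

Lemma rational_bounded_on_unit_itv (P Q : {poly R}) :
  (forall u : R, -1 <= u <= 1 -> Q.[u] != 0) ->
  exists M, forall u : R, -1 <= u <= 1 -> `|P.[u] / Q.[u]| <= M.
Proof.
move=> Q_neq0; have le_N11 : (-1 : R) <= 1 by lra.
have [c c_itv minQ2] := EVT_min le_N11 (continuous_subspaceT (@continuous_horner R (Q * Q))).
have [c' _ maxP2] := EVT_max le_N11 (continuous_subspaceT (@continuous_horner R (P * P))).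
have Q2c_gt0 : 0 < (Q * Q).[c].
  by rewrite hornerM -expr2 exprn_even_gt0 //= Q_neq0 // -in_itv.
exists (1 + (P * P).[c'] / (Q * Q).[c]) => u u_itv.
have u_itv' : u \in `[-1, 1] by rewrite in_itv.
have Qu : Q.[u] != 0 := Q_neq0 u u_itv.
set z := P.[u] / Q.[u].
have z2_le : z ^+ 2 <= (P * P).[c'] / (Q * Q).[c].
  rewrite ler_pdivlMr //; apply: le_trans (maxP2 u u_itv').
  have -> : (P * P).[u] = z ^+ 2 * (Q * Q).[u] by rewrite !hornerM /z; field.
  by rewrite ler_wpM2l ?sqr_ge0 ?minQ2.
have : `|z| <= 1 + z ^+ 2.
  by case: (lerP 0 z) => z0; [rewrite ger0_norm | rewrite ltr0_norm]; nra.
lra.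
Qed.

End Compactness.

Lemma hom_ratio_bounded (R : realType) d (A Q : {poly R}) :
  (forall s t : R, s != 0 \/ t != 0 -> Defs.hom d Q s t != 0) ->
  exists M, forall s t : R, s != 0 \/ t != 0 ->
    `|Defs.hom d A s t / Defs.hom d Q s t| <= M.
Proof.
have chart (A' Q' : {poly R}) :
    (forall s t : R, s != 0 \/ t != 0 -> Defs.hom d Q' s t != 0) ->
    exists M, forall s t : R, t != 0 -> `|s| <= `|t| ->
      `|Defs.hom d A' s t / Defs.hom d Q' s t| <= M.
  move=> Q'_neq0.
  have [|M hM] := @rational_bounded_on_unit_itv R
      (\poly_(i < d.+1) A'`_i) (\poly_(i < d.+1) Q'`_i).
    by move=> u _; rewrite -hom_chart Q'_neq0 //; right; exact: oner_neq0.
  exists M => s t t_neq0 st.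
  have chart_coord p : Defs.hom d p s t = Defs.hom d p (t * (s / t)) (t * 1).
    by rewrite mulr1 mulrC divfK.
  rewrite !chart_coord hom_ratioZ // !hom_chart; apply: hM.
  by rewrite -ler_norml normrM normrV ?unitfE // ler_pdivrMr ?normr_gt0 // mul1r.
move=> Q_neq0; have [M1 hM1] := chart A Q Q_neq0.
have [|M2 hM2] := chart (\poly_(i < d.+1) A`_(d - i)) (\poly_(i < d.+1) Q`_(d - i)).
  by move=> s t st; rewrite -hom_swap Q_neq0 //; case: st; [right | left].
exists (Num.max M1 M2) => s t st; rewrite le_max.
have [st_le | ts_lt] := lerP `|s| `|t|.
  have t_neq0 : t != 0.
    apply: contraTneq st_le => t0; move: st; rewrite t0 eqxx => -[s_neq0|//].
    by rewrite normr0 -ltNge normr_gt0.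
  by rewrite hM1.
have s_neq0 : s != 0 by apply: contraTneq ts_lt => ->; rewrite normr0 -leNgt.
by rewrite (hom_swap d A) (hom_swap d Q) hM2 ?orbT // ltW.
Qed.

Section Puncture.
Variables (R : realType) (F : {poly {poly rat}}) (a b : R[i] * R[i]).
Variables (d : nat) (A1 A2 Q : {poly R}).
Variable Gs : seq ({poly {poly R[i]}} * {poly {poly R[i]}}).
Local Notation C := R[i].
Implicit Types (v c : C * C) (g : {poly {poly C}} * {poly {poly C}}).

Let hC (p : {poly R}) v := Defs.hom d (map_poly (real_complex R) p) v.1 v.2.
Let phi v := (hC A1 v / hC Q v, hC A2 v / hC Q v).
Let psi g c := (ev2 g.1 c.1 c.2, ev2 g.2 c.1 c.2).

Hypothesis phi_defined : forall v, P1minus2 a b v -> hC Q v != 0 /\ onCurve F (phi v).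
Hypothesis psi_cover : forall c, onCurve F c -> exists2 g, g \in Gs & nonzero2 (psi g c).
Hypothesis psi_range : forall c, onCurve F c -> forall g, g \in Gs ->
  nonzero2 (psi g c) -> P1minus2 a b (psi g c).
Hypothesis psi_phi : forall v, P1minus2 a b v -> forall g, g \in Gs ->
  nonzero2 (psi g (phi v)) -> projeq (psi g (phi v)) v.
Hypothesis phi_psi : forall c, onCurve F c -> forall g, g \in Gs ->
  nonzero2 (psi g c) -> phi (psi g c) = c.
Hypotheses (a_neq0 : nonzero2 a) (b_neq0 : nonzero2 b) (a_neq_b : ~ projeq a b).

Lemma hC_conj p v : (hC p v)^*%C = hC p (vconj v).
Proof.
rewrite /hC (rmorph_hom conjc) -map_poly_comp.
by congr Defs.hom; apply: eq_map_poly => x /=; rewrite oppr0.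
Qed.

Lemma hC_real p (s t : R) : hC p (s%:C, t%:C)%C = (Defs.hom d p s t)%:C%C.
Proof. by rewrite /hC (rmorph_hom (real_complex R)). Qed.

Lemma phiZ l v : l != 0 -> phi (l * v.1, l * v.2) = phi v.
Proof. by move=> l_neq0; rewrite /phi /hC /= !hom_ratioZ. Qed.

Lemma phi_conj v : phi (vconj v) = vconj (phi v).
Proof. by rewrite /phi /vconj /= -!hC_conj !fmorph_div. Qed.

Lemma line_P1minus2 t : t != 0 -> P1minus2 a b (a.1 + t * b.1, a.2 + t * b.2).
Proof.
move=> t_neq0; rewrite /P1minus2 /projeq /=.
have not_a : ~ (a.1 + t * b.1) * a.2 = (a.2 + t * b.2) * a.1.
  move=> /eqP; rewrite -subr_eq0.
  have -> : (a.1 + t * b.1) * a.2 - (a.2 + t * b.2) * a.1 = - t * (a.1 * b.2 - a.2 * b.1).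
    by ring.
  by rewrite mulf_eq0 oppr_eq0 (negbTE t_neq0) subr_eq0 => /eqP.
split; last split=> // line_b.
  by apply: NNPP => /projeq0l line_a; apply/not_a/line_a.
apply: a_neq_b; apply/eqP; rewrite -subr_eq0.
have -> : a.1 * b.2 - a.2 * b.1 = (a.1 + t * b.1) * b.2 - (a.2 + t * b.2) * b.1 by ring.
by rewrite line_b subrr.
Qed.

Lemma hC_puncture_eq0 : hC Q a = 0.
Proof.
apply/eqP; apply: contraT => Qa_neq0.
pose line t := (a.1 + t * b.1, a.2 + t * b.2).
pose line1 : {poly C} := a.1%:P + 'X * b.1%:P.
pose line2 : {poly C} := a.2%:P + 'X * b.2%:P.
pose lp p := Defs.hom d (map_poly polyC (map_poly (real_complex R) p)) line1 line2.
have lpE p t : (lp p).[t] = hC p (line t) by rewrite horner_hom !hornerE.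
have line0 : line 0 = a by rewrite /line !mul0r !addr0; case: (a).
have lpQ0 : (lp Q).[0] != 0 by rewrite lpE line0.
have extend (f : C -> C) : has_pow_denom (lp Q) f ->
    (forall t, t != 0 -> f t = 0) -> f 0 = 0.
  by move=> hf f0; apply: has_pow_denom_eq0 hf lpQ0 _ => t t0 _; apply: f0.
have phi_line_frac (G : {poly {poly C}}) :
    has_pow_denom (lp Q) (fun t => ev2 G (phi (line t)).1 (phi (line t)).2).
  apply: eq_has_pow_denom (has_pow_denom_ev2 G
    (has_pow_denom_frac (lp Q) (lp A1)) (has_pow_denom_frac (lp Q) (lp A2))).
  by move=> t; rewrite !lpE.
have phi_a_on : onCurve F (phi a).
  rewrite /onCurve -line0; apply: (extend _ (phi_line_frac _)) => t t_neq0.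
  by have [_] := phi_defined (line_P1minus2 t_neq0).
have [g gG psi_neq0] := psi_cover phi_a_on.
have [_ [psi_not_a _]] := psi_range phi_a_on gG psi_neq0; case: psi_not_a.
apply/eqP; rewrite -subr_eq0; apply/eqP.
have := extend (fun t =>
  (psi g (phi (line t))).1 * line2.[t] - (psi g (phi (line t))).2 * line1.[t]).
rewrite !hornerE line0; apply.
  by apply: has_pow_denomB; apply: has_pow_denomM;
    first [exact: phi_line_frac | exact: has_pow_denom_poly].
move=> t t_neq0; rewrite !hornerE; apply/eqP; rewrite subr_eq0; apply/eqP.
have [psi_line_neq0|/projeq0l psi_line0] := classic (nonzero2 (psi g (phi (line t)))).
  exact: psi_phi (line_P1minus2 t_neq0) g gG psi_line_neq0.
exact: psi_line0 (line t).
Qed.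

Lemma conj_puncture : ~ real_point a -> projeq (vconj a) b.
Proof.
move=> a_nonreal.
have [//|conj_a_not_b] := eqVneq ((vconj a).1 * b.2) ((vconj a).2 * b.1).
have conj_a_P : P1minus2 a b (vconj a).
  split; [exact: nonzero2_conj | split=> [conj_a_a|/eqP]]; last exact/negP.
  exact/a_nonreal/(real_point_of_projeq_conj a_neq0)/projeq_sym.
have [] := phi_defined conj_a_P.
by rewrite -hC_conj hC_puncture_eq0 rmorph0 eqxx.
Qed.

Section NonrealPuncture.
Hypotheses (conj_a_b : projeq (vconj a) b) (a_nonreal : ~ real_point a).

Lemma real_P1minus2 (s t : R) : s != 0 \/ t != 0 -> P1minus2 a b (s%:C, t%:C)%C.
Proof.
move=> /nonzero2_real w_neq0; set w := (_, _).
have not_a : ~ projeq w a.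
  move=> wa; apply/a_nonreal/(real_point_of_projeq_conj a_neq0).
  have := projeq_conj wa; rewrite vconj_real => w_conj_a.
  exact: projeq_trans w_neq0 (projeq_sym wa) w_conj_a.
split=> //; split=> // wb; apply: not_a.
have w_conj_a : projeq w (vconj a) := projeq_trans b_neq0 wb (projeq_sym conj_a_b).
by have := projeq_conj w_conj_a; rewrite vconj_real vconjK.
Qed.

(* The preimage of a real point is a real point of P^1: phi commutes with conjugation and
   is injective. *)
Lemma real_curve_param (x y : R) : onCurve F (x%:C, y%:C)%C ->
  exists s t : R, (s != 0 \/ t != 0) /\ phi (s%:C, t%:C)%C = (x%:C, y%:C)%C.
Proof.
set c := (_, _) => c_on.
have [g gG w_neq0] := psi_cover c_on; set w := psi g c in w_neq0 *.
have [_ [w_not_a w_not_b]] := psi_range c_on gG w_neq0.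
have conj_w_P : P1minus2 a b (vconj w).
  split; [exact: nonzero2_conj | split=> conj_w].
    apply: w_not_b; have := projeq_conj conj_w; rewrite vconjK => w_conj_a.
    exact: projeq_trans (nonzero2_conj a_neq0) w_conj_a conj_a_b.
  apply: w_not_a; have := projeq_conj (projeq_trans b_neq0 conj_w (projeq_sym conj_a_b)).
  by rewrite !vconjK.
have phi_conj_w : phi (vconj w) = c by rewrite phi_conj phi_psi // vconj_real.
have w_real : projeq w (vconj w).
  by have := psi_phi conj_w_P gG; rewrite phi_conj_w; apply.
have [l [l_neq0 [s [t [ls lt]]]]] := real_point_of_projeq_conj w_neq0 w_real.
exists s, t; split; last by rewrite -ls -lt phiZ // phi_psi.
apply/nonzero2_real; rewrite /nonzero2 -ls -lt /=.
by case: w_neq0 => [w1 | w2]; [left | right]; rewrite mulf_neq0.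
Qed.

Lemma real_curve_bounded : exists M, forall x y : R, ev2 (FR R F) x y = 0 ->
  `|x| <= M /\ `|y| <= M.
Proof.
have Q_neq0 (s t : R) : s != 0 \/ t != 0 -> Defs.hom d Q s t != 0.
  move=> st; have [] := phi_defined (real_P1minus2 st).
  by rewrite hC_real eq_complex /= eqxx andbT.
have [M1 hM1] := hom_ratio_bounded A1 Q_neq0.
have [M2 hM2] := hom_ratio_bounded A2 Q_neq0.
exists (Num.max M1 M2) => x y /onCurve_real /real_curve_param [s [t [st]]].
rewrite /phi !hC_real -!(fmorph_div (real_complex R)) => -[<- <-].
by split; rewrite le_max ?hM1 ?hM2 ?orbT.
Qed.

End NonrealPuncture.

Lemma puncture_real : (forall r : R, exists x y : R, ev2 (FR R F) x y = r) -> real_point a.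
Proof.
move=> FR_surj; apply: NNPP => a_nonreal.
have [M box] := real_curve_bounded (conj_puncture a_nonreal) a_nonreal.
have [x [y [xy_root far]]] := surjective_ev2_far_root M FR_surj.
by have [x_le y_le] := box x y xy_root; case: far; lra.
Qed.

End Puncture.

Lemma P1minus2_sym (R : realType) (a b v : R[i] * R[i]) : P1minus2 a b v -> P1minus2 b a v.
Proof. by case=> [? [? ?]]. Qed.

Lemma iso_P1minus2_over_R_sym (R : realType) F (a b : R[i] * R[i]) :
  iso_P1minus2_over_R F a b -> iso_P1minus2_over_R F b a.
Proof.
case=> d [A1 [A2 [Q [phi_defined [Gs [psi_cover [psi_agree [psi_range [psi_phi phi_psi]]]]]]]]].
exists d, A1, A2, Q; split; first by move=> v /P1minus2_sym /phi_defined.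
exists Gs; split=> //; split=> //; split; last split=> //.
  by move=> c c_on g gG psi_neq0; apply/P1minus2_sym/psi_range.
by move=> v /P1minus2_sym /psi_phi.
Qed.

Lemma iso_puncture_real (R : realType) F (a b : R[i] * R[i]) :
  (forall r : R, exists x y : R, ev2 (FR R F) x y = r) ->
  nonzero2 a -> nonzero2 b -> ~ projeq a b -> iso_P1minus2_over_R F a b -> real_point a.
Proof.
move=> FR_surj a_neq0 b_neq0 a_neq_b.
case=> d [A1 [A2 [Q [phi_defined [Gs [psi_cover [_ [psi_range [psi_phi phi_psi]]]]]]]]].
exact: (puncture_real phi_defined psi_cover psi_range psi_phi phi_psi a_neq0 b_neq0 a_neq_b).
Qed.

Theorem mainTheorem13 (R : realType) (F : {poly {poly rat}})
  (a b : R[i] * R[i]) :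
  (* F(R x R) = R *)
  (forall r : R, exists x y : R, ev2 (FR R F) x y = r) ->
  (* F(Z x Z) contains N *)
  (forall n : nat, exists x y : int, ev2 F x%:~R y%:~R = n%:R) ->
  (* C = {F = 0} is smooth and isomorphic over Qbar to A^1_* *)
  smooth_curve R F ->
  iso_Gm_over_Qbar R F ->
  (* a, b two distinct points of P^1(C) and phi : P^1\{a,b} -> C an iso *)
  nonzero2 a -> nonzero2 b -> ~ projeq a b ->
  iso_P1minus2_over_R F a b ->
  real_point a /\ real_point b.
Proof.
(* Only F(R x R) = R is needed. *)
move=> FR_surj _ _ _ a_neq0 b_neq0 a_neq_b iso; split.
  exact: iso_puncture_real iso.
by apply: iso_puncture_real (iso_P1minus2_over_R_sym iso) => // /projeq_sym.
Qed.
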